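(* Let $L$ be a finite-dimensional Lie algebra over a field $F$. 1. $L$ is primitive if and only if there exists a subalgebra $M$ of $L$ such that $L = M + A$ for every minimal ideal $A$ of $L$. 2. Let $L$ be primitive, let $U$ be a core-free maximal subalgebra of $L$ and let $A$ be a non-trivial ideal of $L$. Put $C = C_L(A)$. Then $C \cap U = 0$, and either $C = 0$ or $C$ is a minimal ideal of $L$. 3. If $L$ is primitive and $U$ is a core-free maximal subalgebra of $L$, then exactly one of the following holds: (a) $\mathrm{Soc}(L) = A$ is a self-centralising abelian minimal ideal of $L$ which is complemented by $U$, i.e. $L = U \dot{+} A$ (vector space direct sum); (b) $\mathrm{Soc}(L) = A$ is a non-abelian minimal ideal of $L$ which is supplemented by $U$, i.e. $L = U + A$, and in this case $C_L(A) = 0$; (c) $\mathrm{Soc}(L) = A \oplus B$, where $A$ and $B$ are the only two minimal ideals of $L$ and both are complemented by $U$, i.e. $L = A \dot{+} U = B \dot{+} U$; in this case $A = C_L(B)$, $B = C_L(A)$, and $A$, $B$ and $(A+B)\cap U$ are pairwise isomorphic non-abelian Lie algebras.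
   Context: All Lie algebras are finite-dimensional over a field $F$. For a subalgebra $U$ of $L$, the core $U_L$ is the largest ideal of $L$ contained in $U$; $U$ is core-free if $U_L = 0$. $L$ is called primitive if it has a core-free maximal subalgebra. $C_L(U) = \{x \in L : [x,U] = 0\}$. $\mathrm{Soc}(L)$ is the sum of all minimal ideals of $L$. An ideal $A$ is self-centralising if $C_L(A) = A$. *)

From HB Require Import structures.
From mathcomp Require Import all_boot all_algebra.
Set Implicit Arguments. Unset Strict Implicit. Unset Printing Implicit Defensive.
Import GRing.Theory.
Local Open Scope ring_scope.

Section Lie.
Variables (F : fieldType) (V : vectType F) (br : V -> V -> V).

Definition lie_axioms : Prop :=
  [/\ forall (a : F) (x y z : V), br (a *: x + y) z = a *: br x z + br y z,
      forall (a : F) (x y z : V), br z (a *: x + y) = a *: br z x + br z y,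
      forall x : V, br x x = 0 &
      forall x y z : V, br x (br y z) + br y (br z x) + br z (br x y) = 0].

Definition subalgebra (U : {vspace V}) : Prop :=
  forall x y, x \in U -> y \in U -> br x y \in U.

Definition ideal (I : {vspace V}) : Prop :=
  forall x y, y \in I -> br x y \in I.

(* U_L = 0 : the largest ideal contained in U is zero, i.e. every ideal
   contained in U is zero. *)
Definition core_free (U : {vspace V}) : Prop :=
  forall I : {vspace V}, ideal I -> (I <= U)%VS -> I = 0%VS.

Definition maximal_subalgebra (M : {vspace V}) : Prop :=
  [/\ subalgebra M, M != fullv &
      forall N : {vspace V}, subalgebra N -> (M <= N)%VS -> N = M \/ N = fullv].

Definition primitive : Prop :=
  exists U : {vspace V}, maximal_subalgebra U /\ core_free U.

Definition minimal_ideal (A : {vspace V}) : Prop :=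
  [/\ ideal A, A != 0%VS &
      forall B : {vspace V}, ideal B -> (B <= A)%VS -> B = 0%VS \/ B = A].

Definition centralizes (A : {vspace V}) (x : V) : Prop :=
  forall a, a \in A -> br x a = 0.

Definition is_centralizer (C A : {vspace V}) : Prop :=
  forall x, x \in C <-> centralizes A x.

Definition abelian (A : {vspace V}) : Prop :=
  forall x y, x \in A -> y \in A -> br x y = 0.

(* S = Soc(L): the sum of all minimal ideals, i.e. the smallest subspace
   containing every minimal ideal. *)
Definition is_socle (S : {vspace V}) : Prop :=
  (forall A, minimal_ideal A -> (A <= S)%VS) /\
  (forall W : {vspace V}, (forall A, minimal_ideal A -> (A <= W)%VS) -> (S <= W)%VS).

Definition lie_isomorphic (X Y : {vspace V}) : Prop :=
  exists f : 'End(V),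
    [/\ (f @: X)%VS = Y, (lker f :&: X)%VS = 0%VS &
        forall x y, x \in X -> y \in X -> f (br x y) = br (f x) (f y)].

Definition complemented_by (A U : {vspace V}) : Prop :=
  (U + A)%VS = fullv /\ (U :&: A)%VS = 0%VS.

End Lie.

From HB Require Import structures.
From mathcomp Require Import all_boot all_algebra.
From mathcomp Require Import zify.
From Stdlib Require Import Classical.
Set Implicit Arguments. Unset Strict Implicit. Unset Printing Implicit Defensive.
Import GRing.Theory.
Local Open Scope ring_scope.

(** A core-free maximal subalgebra U supplements every nonzero ideal A, since
    U + A is a subalgebra properly containing U. Hence the centraliser C of A
    meets U trivially (C :&: U is an ideal inside U), and C, itself an ideal
    supplemented by U, is minimal as soon as it is nonzero. Two distinct
    minimal ideals centralise each other, so each is the centraliser of the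
    other and there are at most two of them. When there are two, A and B, both
    are complements of U; the projection p onto B along U satisfies
    p [a, a'] = - [p a, p a'] on A, so - p : A -> B and 1 - p : A -> (A+B) :&: U
    are Lie isomorphisms. *)

Section LieAlgebra.
Variables (F : fieldType) (V : vectType F) (br : V -> V -> V).
Hypothesis HL : lie_axioms br.

Lemma brDl x y z : br (x + y) z = br x z + br y z.
Proof. by case: HL => h _ _ _; have := h 1 x y z; rewrite !scale1r. Qed.

Lemma brDr x y z : br z (x + y) = br z x + br z y.
Proof. by case: HL => _ h _ _; have := h 1 x y z; rewrite !scale1r. Qed.

Lemma br0l z : br 0 z = 0.
Proof. by apply: (addrI (br 0 z)); rewrite -brDl !addr0. Qed.

Lemma br0r z : br z 0 = 0.
Proof. by apply: (addrI (br z 0)); rewrite -brDr !addr0. Qed.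

Lemma brZl a x z : br (a *: x) z = a *: br x z.
Proof. by case: HL => h _ _ _; rewrite -(addr0 (a *: x)) h br0l addr0. Qed.

Lemma brZr a x z : br z (a *: x) = a *: br z x.
Proof. by case: HL => _ h _ _; rewrite -(addr0 (a *: x)) h br0r addr0. Qed.

Lemma brC x y : br x y = - br y x.
Proof.
have [_ _ brxx _] := HL; apply/eqP; rewrite -subr_eq0 opprK.
by have := brxx (x + y); rewrite brDl !brDr !brxx add0r addr0 => ->.
Qed.

Lemma brNl x z : br (- x) z = - br x z.
Proof. by rewrite -scaleN1r brZl scaleN1r. Qed.

Lemma brNr x z : br z (- x) = - br z x.
Proof. by rewrite -scaleN1r brZr scaleN1r. Qed.

Lemma brBl x y z : br (x - y) z = br x z - br y z.
Proof. by rewrite brDl brNl. Qed.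

Lemma brBr x y z : br z (x - y) = br z x - br z y.
Proof. by rewrite brDr brNr. Qed.

Definition ad a := br a.
Definition adr a x := br x a.

Lemma ad_is_linear a : linear (ad a).
Proof. by move=> c x y; rewrite /ad brDr brZr. Qed.
HB.instance Definition _ a := GRing.isLinear.Build F V V *:%R (ad a) (ad_is_linear a).

Lemma adr_is_linear a : linear (adr a).
Proof. by move=> c x y; rewrite /adr brDl brZl. Qed.
HB.instance Definition _ a := GRing.isLinear.Build F V V *:%R (adr a) (adr_is_linear a).

Definition centralizer (A : {vspace V}) : {vspace V} :=
  (\bigcap_(i < \dim A) lker (linfun (adr (vbasis A)`_i)))%VS.

Lemma is_centralizer_centralizer A : is_centralizer br (centralizer A) A.
Proof.
move=> x; split=> [Cx a Aa | cxA].
  rewrite (coord_vbasis Aa) -[br x _]/(ad x _) linear_sum big1 // => i _.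
  rewrite linearZ /=; move: Cx; rewrite memvE => /subv_bigcapP/(_ i isT).
  by rewrite -memvE memv_ker lfunE /= /adr /ad => /eqP ->; rewrite scaler0.
rewrite memvE; apply/subv_bigcapP => i _; rewrite -memvE memv_ker lfunE /= /adr.
case: (ltnP i (size (vbasis A))) => [lt_i | le_i].
  by rewrite cxA // vbasis_mem // mem_nth.
by rewrite nth_default // br0r.
Qed.

Lemma is_centralizer_unique C C' A :
  is_centralizer br C A -> is_centralizer br C' A -> C = C'.
Proof.
move=> cenC cenC'; apply/vspaceP => x.
by apply/idP/idP => [/(cenC x)/(cenC' x) | /(cenC' x)/(cenC x)].
Qed.

Lemma vspace_eq0 (W : {vspace V}) : (forall x, x \in W -> x = 0) -> W = 0%VS.
Proof. by move=> W0; apply/eqP; rewrite -subv0; apply/subvP => x /W0 ->; rewrite mem0v. Qed.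

Lemma minimal_vspace_exists (P : {vspace V} -> Prop) I : P I ->
  exists2 A, (A <= I)%VS & P A /\ forall B, P B -> (B <= A)%VS -> B = A.
Proof.
move: {2}(\dim I).+1 (ltnSn (\dim I)) => n; elim: n I => // n IH I ltIn PI.
have [[B [PB sBI nBI]] | noB] := classic (exists B, [/\ P B, (B <= I)%VS & B != I]).
  have ltBI : (\dim B < \dim I)%N by rewrite (ltn_leqif (dimv_leqif_eq sBI)).
  have [A sAB minA] := IH B (leq_trans ltBI ltIn) PB.
  by exists A => //; apply: subv_trans sBI.
exists I => //; split=> // B PB sBI; apply/eqP; apply: contra_notT noB => nBI.
by exists B.
Qed.

Lemma maximal_vspace_exists (P : {vspace V} -> Prop) N : P N ->
  exists2 M, (N <= M)%VS & P M /\ forall W, P W -> (M <= W)%VS -> W = M.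
Proof.
move: {2}(\dim {:V} - \dim N).+1 (ltnSn (\dim {:V} - \dim N)) => n.
elim: n N => // n IH N ltNn PN.
have [[W [PW sNW nWN]] | noW] := classic (exists W, [/\ P W, (N <= W)%VS & W != N]).
  have ltNW : (\dim N < \dim W)%N.
    by rewrite (ltn_leqif (dimv_leqif_eq sNW)) eq_sym.
  have leWL : (\dim W <= \dim {:V})%N := dimvS (subvf W).
  have [M sWM maxM] := IH W ltac:(lia) PW.
  by exists M => //; apply: subv_trans sWM.
exists N => //; split=> // W PW sNW; apply/eqP; apply: contra_notT noW => nWN.
by exists W.
Qed.

Lemma ideal_fullv : ideal br fullv.
Proof. by move=> x y _; rewrite memvf. Qed.

Lemma ideal_brl I x y : ideal br I -> y \in I -> br y x \in I.
Proof. by move=> idI Iy; rewrite brC memvN idI. Qed.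

Lemma ideal_subalgebra I : ideal br I -> subalgebra br I.
Proof. by move=> idI x y _; apply: idI. Qed.

Lemma idealI I J : ideal br I -> ideal br J -> ideal br (I :&: J)%VS.
Proof. by move=> idI idJ x y /memv_capP [Iy Jy]; rewrite memv_cap idI ?idJ. Qed.

Lemma subalgebraD_ideal U A :
  subalgebra br U -> ideal br A -> subalgebra br (U + A)%VS.
Proof.
move=> saU idA x y /memv_addP [u Uu [a Aa ->]] /memv_addP [u' Uu' [a' Aa' ->]].
rewrite brDl !brDr -!addrA memv_add ?saU //.
by apply: memvD; [apply: idA | apply: memvD; [apply: ideal_brl | apply: idA]].
Qed.

Lemma ideal_centralizer C A :
  ideal br A -> is_centralizer br C A -> ideal br C.
Proof.
move=> idA cenC x y /cenC cyA; apply/cenC => a Aa.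
have [_ _ _ jacobi] := HL; have := jacobi x y a.
rewrite cyA // br0r add0r cyA ?ideal_brl // add0r => /eqP.
by rewrite brC oppr_eq0 => /eqP.
Qed.

Lemma minimal_ideal_exists I : ideal br I -> I != 0%VS ->
  exists2 A, minimal_ideal br A & (A <= I)%VS.
Proof.
move=> idI nzI.
have [A sAI [[idA nzA] minA]] :=
  minimal_vspace_exists (P := fun B => ideal br B /\ B != 0%VS) (conj idI nzI).
exists A => //; split=> // B idB sBA.
by have [->|nzB] := eqVneq B 0%VS; [left | right; apply: minA].
Qed.

Lemma maximal_subalgebra_exists N : subalgebra br N -> N != fullv ->
  exists2 U, maximal_subalgebra br U & (N <= U)%VS.
Proof.
move=> saN nfN.
have [U sNU [[saU nfU] maxU]] :=
  maximal_vspace_exists (P := fun W => subalgebra br W /\ W != fullv) (conj saN nfN).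
exists U => //; split=> // W saW sUW.
by have [->|nfW] := eqVneq W fullv; [right | left; apply: maxU].
Qed.

Lemma minimal_ideals_capv0 A B :
  minimal_ideal br A -> minimal_ideal br B -> A != B -> (A :&: B)%VS = 0%VS.
Proof.
move=> [idA nzA minA] [idB nzB minB] nAB.
have [//|AB_A] := minA _ (idealI idA idB) (capvSl _ _).
have sAB : (A <= B)%VS by rewrite -AB_A capvSr.
by have [A0|AB] := minB _ idA sAB; [rewrite A0 eqxx in nzA | rewrite AB eqxx in nAB].
Qed.

Lemma minimal_ideals_commute A B :
  minimal_ideal br A -> minimal_ideal br B -> A != B ->
  forall a b, a \in A -> b \in B -> br a b = 0.
Proof.
move=> minA minB nAB a b Aa Bb; have [[idA _ _] [idB _ _]] := (minA, minB).
apply/eqP; rewrite -memv0 -(minimal_ideals_capv0 minA minB nAB).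
by rewrite memv_cap ideal_brl // idB.
Qed.

Lemma socle_unique S1 S2 : is_socle br S1 -> is_socle br S2 -> S1 = S2.
Proof. by move=> [sub1 least1] [sub2 least2]; apply: subv_anti; rewrite least1 // least2. Qed.

Lemma socle_of_unique_minimal A : minimal_ideal br A ->
  (forall D, minimal_ideal br D -> D = A) -> is_socle br A.
Proof. by move=> minA onlyA; split=> [D /onlyA -> | W subW]; [exact: subvv | exact: subW]. Qed.

Lemma minimal_socle_unique S A B : is_socle br S -> minimal_ideal br S ->
  minimal_ideal br A -> minimal_ideal br B -> A = B.
Proof.
have eqS D : is_socle br S -> minimal_ideal br S -> minimal_ideal br D -> D = S.
  move=> [subS _] [_ _ minS] minD; have [idD nzD _] := minD.
  by have [D0|] := minS D idD (subS D minD); first by rewrite D0 eqxx in nzD.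
by move=> socS minS minA minB; rewrite (eqS A) // (eqS B).
Qed.

Lemma lie_isomorphic_abelian X Y : subalgebra br X ->
  lie_isomorphic br X Y -> abelian br Y -> abelian br X.
Proof.
move=> saX [f [fXY kerX0 fbr]] abY x y Xx Xy.
have : br x y \in (lker f :&: X)%VS.
  by rewrite memv_cap saX // andbT memv_ker fbr // abY // -fXY memv_img.
by rewrite kerX0 memv0 => /eqP.
Qed.

Section Projection.
Variables U X Y : {vspace V}.
Hypotheses (saU : subalgebra br U) (idY : ideal br Y)
  (commXY : forall a b, a \in X -> b \in Y -> br a b = 0)
  (cplY : complemented_by Y U).

Let p := daddv_pi Y U.

Let capYU : (Y :&: U)%VS = 0%VS.
Proof. by case: cplY => _; rewrite capvC. Qed.

Let mem_addYU v : v \in (Y + U)%VS.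
Proof. by case: cplY; rewrite addvC => -> _; rewrite memvf. Qed.

Let p_add v w : p (v + w) = p v + p w.
Proof. exact: raddfD. Qed.

Let p_opp v : p (- v) = - p v.
Proof. exact: raddfN. Qed.

Let p_mem v : p v \in Y.
Proof. exact: memv_pi. Qed.

Let p_id y : y \in Y -> p y = y.
Proof. exact: daddv_pi_id. Qed.

Let subr_p_mem v : v - p v \in U.
Proof.
have <- : daddv_pi U Y v = v - p v.
  by rewrite -{2}(daddv_pi_add capYU (mem_addYU v)) addrC addKr.
exact: memv_pi.
Qed.

Let p_U u : u \in U -> p u = 0.
Proof.
move=> Uu; have := daddv_pi_add capYU (mem_addYU u).
by rewrite (daddv_pi_id (proj2 cplY) Uu) => /(canRL (addrK u)); rewrite subrr.
Qed.

(* [a - p a] and [a' - p a'] lie in the subalgebra U and X centralises Y,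
   so [p] kills [br a a' + br (p a) (p a')]. *)
Let p_br a a' : a \in X -> a' \in X -> p (br a a') = - br (p a) (p a').
Proof.
move=> Xa Xa'.
have U_br : br (a - p a) (a' - p a') \in U by rewrite saU.
have expand : br (a - p a) (a' - p a') = br a a' + br (p a) (p a').
  rewrite brBl !brBr (commXY Xa (p_mem _)) (brC (p a) a') (commXY Xa' (p_mem _)).
  by rewrite oppr0 !addr0 add0r opprK.
move: (p_U U_br); rewrite expand p_add (p_id (idY _ (p_mem _))).
by move/eqP; rewrite addr_eq0 => /eqP.
Qed.

Lemma lie_isomorphic_complements : complemented_by X U -> lie_isomorphic br X Y.
Proof.
case=> UX_full UX0; exists (- p); split.
- apply/eqP; rewrite eqEsubv; apply/andP; split; apply/subvP => v.
    by case/memv_imgP => x _ ->; rewrite opp_lfunE memvN p_mem.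
  move=> Yv; have : v \in (U + X)%VS by rewrite UX_full memvf.
  case/memv_addP => u Uu [a Xa v_ua]; apply/memv_imgP; exists (- a); first by rewrite memvN.
  by rewrite opp_lfunE p_opp opprK -(p_id Yv) v_ua p_add p_U // add0r.
- apply: vspace_eq0 => x /memv_capP [].
  rewrite memv_ker opp_lfunE oppr_eq0 => /eqP px0 Xx.
  have : x \in (U :&: X)%VS by rewrite memv_cap Xx andbT -[x]subr0 -px0.
  by rewrite UX0 memv0 => /eqP.
- by move=> x y Xx Xy; rewrite !opp_lfunE p_br // opprK brNl brNr opprK.
Qed.

Lemma lie_isomorphic_capv_addv : (X :&: Y)%VS = 0%VS ->
  lie_isomorphic br X ((X + Y) :&: U)%VS.
Proof.
move=> capXY; exists (\1%VF - p); split.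
- apply/eqP; rewrite eqEsubv; apply/andP; split; apply/subvP => v.
    case/memv_imgP => x Xx ->; rewrite add_lfunE opp_lfunE id_lfunE.
    by rewrite memv_cap subr_p_mem andbT memv_add // memvN p_mem.
  case/memv_capP => /memv_addP [a Xa [b Yb v_ab]] Uv.
  apply/memv_imgP; exists a => //; rewrite add_lfunE opp_lfunE id_lfunE.
  have := p_U Uv; rewrite v_ab p_add (p_id Yb) => /eqP.
  by rewrite addr_eq0 => /eqP ->; rewrite opprK.
- apply: vspace_eq0 => x /memv_capP [].
  rewrite memv_ker add_lfunE opp_lfunE id_lfunE subr_eq0 => /eqP px Xx.
  have : x \in (X :&: Y)%VS by rewrite memv_cap Xx px p_mem.
  by rewrite capXY memv0 => /eqP.
- move=> x y Xx Xy; rewrite !add_lfunE !opp_lfunE !id_lfunE p_br //.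
  rewrite brBl !brBr (commXY Xx (p_mem _)) (brC (p x) y) (commXY Xy (p_mem _)).
  by rewrite oppr0 !addr0 add0r.
Qed.

End Projection.

Section CoreFree.
Variable U : {vspace V}.
Hypotheses (maxU : maximal_subalgebra br U) (cfU : core_free br U).

Lemma addv_ideal_fullv A : ideal br A -> A != 0%VS -> (U + A)%VS = fullv.
Proof.
move=> idA nzA; have [saU _ maximalU] := maxU.
have [UA_U|//] := maximalU _ (subalgebraD_ideal saU idA) (addvSl _ _).
by move: nzA; rewrite (cfU idA) ?eqxx // -UA_U addvSr.
Qed.

Lemma centralizer_capv0 C A : ideal br A -> A != 0%VS ->
  is_centralizer br C A -> (C :&: U)%VS = 0%VS.
Proof.
move=> idA nzA cenC; have [saU _ _] := maxU.
apply: cfU (capvSr _ _) => x y /memv_capP [Cy Uy].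
have : x \in (U + A)%VS by rewrite addv_ideal_fullv // memvf.
case/memv_addP => u Uu [a Aa ->].
rewrite brDl (brC a y) ((cenC y).1 Cy a Aa) oppr0 addr0.
by rewrite memv_cap (ideal_centralizer idA cenC) // saU.
Qed.

Lemma centralizer_eq0_or_minimal C A : ideal br A -> A != 0%VS ->
  is_centralizer br C A -> C = 0%VS \/ minimal_ideal br C.
Proof.
move=> idA nzA cenC; have [->|nzC] := eqVneq C 0%VS; [by left | right].
split=> [|//|D idD sDC]; first exact: ideal_centralizer cenC.
have [->|nzD] := eqVneq D 0%VS; [by left | right].
apply/eqP; rewrite eqEsubv sDC; apply/subvP => x Cx.
have : x \in (U + D)%VS by rewrite addv_ideal_fullv // memvf.
case/memv_addP => u Uu [d Dd x_ud].
have : u \in (C :&: U)%VS.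
  by rewrite memv_cap Uu andbT -(addrK d u) -x_ud memvB // (subvP sDC).
by rewrite (centralizer_capv0 idA nzA cenC) memv0 x_ud => /eqP ->; rewrite add0r.
Qed.

Lemma minimal_ideal_pair_centralizer A B : minimal_ideal br A ->
  minimal_ideal br B -> A != B -> is_centralizer br B A.
Proof.
move=> minA minB nAB; have [[idA nzA _] [idB nzB _]] := (minA, minB).
have cenA := is_centralizer_centralizer A.
have sBC : (B <= centralizer A)%VS.
  apply/subvP => b Bb; apply/cenA => a Aa.
  by rewrite brC (minimal_ideals_commute minA minB nAB) ?oppr0.
have [C0 | [_ _ minC]] := centralizer_eq0_or_minimal idA nzA cenA.
  by rewrite C0 subv0 (negbTE nzB) in sBC.
by have [B0|->] := minC B idB sBC; first by rewrite B0 eqxx in nzB.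
Qed.

Lemma minimal_ideal_pair_nonabelian A B : minimal_ideal br A ->
  minimal_ideal br B -> A != B -> ~ abelian br A.
Proof.
move=> minA minB nAB abA; have [[idA nzA _] [_ _ minB']] := (minA, minB).
have sAB : (A <= B)%VS.
  by apply/subvP => x Ax; apply/(minimal_ideal_pair_centralizer minA minB nAB) => a; apply: abA.
by have [A0|AB] := minB' A idA sAB; [rewrite A0 eqxx in nzA | rewrite AB eqxx in nAB].
Qed.

Lemma abelian_minimal_ideal_structure A : minimal_ideal br A ->
  (forall D, minimal_ideal br D -> D = A) -> abelian br A ->
  [/\ is_socle br A, minimal_ideal br A, abelian br A,
      is_centralizer br A A & complemented_by A U].
Proof.
move=> minA onlyA abA; have [idA nzA _] := minA.
have cenA := is_centralizer_centralizer A.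
have sAC : (A <= centralizer A)%VS.
  by apply/subvP => x Ax; apply/cenA => a; apply: abA.
have cenAA : is_centralizer br A A.
  have [C0 | minC] := centralizer_eq0_or_minimal idA nzA cenA.
    by rewrite C0 subv0 (negbTE nzA) in sAC.
  by rewrite -{1}(onlyA _ minC).
split=> //; first exact: socle_of_unique_minimal.
by split; [apply: addv_ideal_fullv | rewrite capvC; apply: centralizer_capv0 cenAA].
Qed.

Lemma nonabelian_minimal_ideal_structure A : minimal_ideal br A ->
  (forall D, minimal_ideal br D -> D = A) -> ~ abelian br A ->
  [/\ is_socle br A, minimal_ideal br A, ~ abelian br A,
      (U + A)%VS = fullv & is_centralizer br 0%VS A].
Proof.
move=> minA onlyA nabA; have [idA nzA _] := minA.
have cenA := is_centralizer_centralizer A.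
split=> //; [exact: socle_of_unique_minimal | exact: addv_ideal_fullv |].
have [<-//| minC] := centralizer_eq0_or_minimal idA nzA cenA.
case: nabA => x y; rewrite -{1}(onlyA _ minC) => /cenA; exact.
Qed.

Lemma minimal_ideal_pair_structure A B : minimal_ideal br A ->
  minimal_ideal br B -> A != B ->
  [/\ [/\ is_socle br (A + B)%VS, (A :&: B)%VS = 0%VS,
          minimal_ideal br A, minimal_ideal br B & A != B],
      (forall D, minimal_ideal br D -> D = A \/ D = B),
      complemented_by A U /\ complemented_by B U,
      is_centralizer br A B /\ is_centralizer br B A &
      [/\ ~ abelian br A, ~ abelian br B, ~ abelian br ((A + B) :&: U)%VS &
          [/\ lie_isomorphic br A B, lie_isomorphic br A ((A + B) :&: U)%VS &
              lie_isomorphic br B ((A + B) :&: U)%VS]]].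
Proof.
move=> minA minB nAB; have nBA : B != A by rewrite eq_sym.
have [saU _ _] := maxU; have [[idA nzA _] [idB nzB _]] := (minA, minB).
have cenBA := minimal_ideal_pair_centralizer minA minB nAB.
have cenAB := minimal_ideal_pair_centralizer minB minA nBA.
have onlyAB D : minimal_ideal br D -> D = A \/ D = B.
  move=> minD; have [->|nDA] := eqVneq D A; [by left | right].
  apply: (is_centralizer_unique _ cenBA).
  by apply: minimal_ideal_pair_centralizer; rewrite // eq_sym.
have cplA : complemented_by A U.
  by split; [apply: addv_ideal_fullv | rewrite capvC; apply: centralizer_capv0 cenAB].
have cplB : complemented_by B U.
  by split; [apply: addv_ideal_fullv | rewrite capvC; apply: centralizer_capv0 cenBA].
have commAB := minimal_ideals_commute minA minB nAB.
have isoAW := lie_isomorphic_capv_addv saU idB commAB cplB (minimal_ideals_capv0 minA minB nAB).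
have isoBW : lie_isomorphic br B ((A + B) :&: U)%VS.
  rewrite addvC; apply: (lie_isomorphic_capv_addv saU idA _ cplA).
  - exact: minimal_ideals_commute minB minA nBA.
  - exact: minimal_ideals_capv0 minB minA nBA.
have nabA := minimal_ideal_pair_nonabelian minA minB nAB.
split=> //.
- split=> //; last exact: minimal_ideals_capv0.
  split=> [D /onlyAB [->|->] | W subW]; [exact: addvSl | exact: addvSr |].
  by rewrite subv_add !subW.
- split=> //; first exact: minimal_ideal_pair_nonabelian nBA.
  by move/(lie_isomorphic_abelian (ideal_subalgebra idA) isoAW).
- by split=> //; apply: lie_isomorphic_complements saU idB commAB cplB cplA.
Qed.

End CoreFree.

Lemma primitiveP : primitive br <-> exists M : {vspace V},
  [/\ subalgebra br M, M != fullv & forall A, minimal_ideal br A -> (M + A)%VS = fullv].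
Proof.
split=> [[U [maxU cfU]] | [M [saM nfM suppM]]].
  have [saU nfU _] := maxU; exists U; split=> // A [idA nzA _].
  exact: addv_ideal_fullv.
have [U maxU sMU] := maximal_subalgebra_exists saM nfM.
exists U; split=> // I idI sIU; apply/eqP; apply: contraT => nzI.
have [A minA sAI] := minimal_ideal_exists idI nzI.
have [_ nfU _] := maxU; rewrite -(negbTE nfU) eqEsubv subvf -(suppM A minA).
by rewrite subv_add sMU (subv_trans sAI sIU).
Qed.

End LieAlgebra.

Unset Implicit Arguments.
Theorem theorem1p1 (F : fieldType) (V : vectType F) (br : V -> V -> V)
    (HL : lie_axioms br) :
  (* 1 *)
  (primitive br <->
     exists M : {vspace V}, [/\ subalgebra br M, M != fullv &
       forall A, minimal_ideal br A -> (M + A)%VS = fullv])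
  /\
  (* 2 *)
  (forall U A C : {vspace V},
     primitive br -> maximal_subalgebra br U -> core_free br U ->
     ideal br A -> A != 0%VS -> is_centralizer br C A ->
     (C :&: U)%VS = 0%VS /\ (C = 0%VS \/ minimal_ideal br C))
  /\
  (* 3 *)
  (forall U : {vspace V},
     primitive br -> maximal_subalgebra br U -> core_free br U ->
     let Pa := exists A : {vspace V},
         [/\ is_socle br A, minimal_ideal br A, abelian br A,
             is_centralizer br A A & complemented_by A U] in
     let Pb := exists A : {vspace V},
         [/\ is_socle br A, minimal_ideal br A, ~ abelian br A,
             (U + A)%VS = fullv & is_centralizer br 0%VS A] in
     let Pc := exists A B : {vspace V},
         [/\ [/\ is_socle br (A + B)%VS, (A :&: B)%VS = 0%VS,
                 minimal_ideal br A, minimal_ideal br B & A != B],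
             (forall D, minimal_ideal br D -> D = A \/ D = B),
             complemented_by A U /\ complemented_by B U,
             is_centralizer br A B /\ is_centralizer br B A &
             [/\ ~ abelian br A, ~ abelian br B, ~ abelian br ((A + B) :&: U)%VS &
                 [/\ lie_isomorphic br A B, lie_isomorphic br A ((A + B) :&: U)%VS &
                     lie_isomorphic br B ((A + B) :&: U)%VS]]] in
     (Pa \/ Pb \/ Pc) /\ ~ (Pa /\ Pb) /\ ~ (Pa /\ Pc) /\ ~ (Pb /\ Pc)).
Proof.
split; first exact: primitiveP.
split=> [U A C _ maxU cfU idA nzA cenC | U _ maxU cfU /=].
  split; first exact: (centralizer_capv0 HL maxU cfU idA nzA cenC).
  exact: (centralizer_eq0_or_minimal HL maxU cfU idA nzA cenC).
have nzL : (fullv : {vspace V}) != 0%VS.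
  have [_ nfU _] := maxU.
  by apply: contraNneq nfU => L0; rewrite eqEsubv subvf L0 sub0v.
have [A minA _] := minimal_ideal_exists (ideal_fullv br) nzL.
split.
  have [[B [minB nBA]] | onlyB] := classic (exists B, minimal_ideal br B /\ B != A).
    by right; right; exists A, B; apply: minimal_ideal_pair_structure; rewrite // eq_sym.
  have onlyA D : minimal_ideal br D -> D = A.
    by move=> minD; apply/eqP; apply: contra_notT onlyB => nDA; exists D.
  have [abA | nabA] := classic (abelian br A).
    by left; exists A; apply: abelian_minimal_ideal_structure.
  by right; left; exists A; apply: nonabelian_minimal_ideal_structure.
split; [|split].
- case=> [[A1 [socA1 _ abA1 _ _]] [A2 [socA2 _ nabA2 _ _]]].
  by rewrite (socle_unique socA1 socA2) in abA1.
- case=> [[S [socS minS _ _ _]] [A1 [B1 [[_ _ minA1 minB1 nAB] _ _ _ _]]]].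
  by rewrite (minimal_socle_unique socS minS minA1 minB1) eqxx in nAB.
- case=> [[S [socS minS _ _ _]] [A1 [B1 [[_ _ minA1 minB1 nAB] _ _ _ _]]]].
  by rewrite (minimal_socle_unique socS minS minA1 minB1) eqxx in nAB.
Qed.
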